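(* Let $n\neq 1$ be a real number, $k_n=n-1$, and $k_0,k_1,k_2\in\mathbb{R}$. On the phase space with canonical coordinates $(r,\phi,p_r,p_\phi)$, $r>0$, restricted to the open set where $\cos(k_n\phi)\sin(k_n\phi)\neq 0$, consider $$H_{na}=\tfrac12 r^{2n}\Big(p_r^2+\tfrac{p_\phi^2}{r^2}\Big)+\frac{k_0}{r^{2k_n}}+r^{2k_n}\Big(\frac{k_1}{\cos^2(k_n\phi)}+\frac{k_2}{\sin^2(k_n\phi)}\Big).$$ With $P_1=r^n\big(p_r\cos(k_n\phi)+\tfrac1r p_\phi\sin(k_n\phi)\big)$ and $P_2=r^n\big(p_r\sin(k_n\phi)-\tfrac1r p_\phi\cos(k_n\phi)\big)$, the functions $$J_{a1}=P_1^2+\frac{2k_0}{r^{2k_n}}\cos^2(k_n\phi)+2k_1r^{2k_n}\sec^2(k_n\phi),\qquad J_{a2}=P_2^2+\frac{2k_0}{r^{2k_n}}\sin^2(k_n\phi)+2k_2r^{2k_n}\csc^2(k_n\phi),$$ $$J_{a3}=p_\phi^2+2\Big(\frac{k_1}{\cos^2(k_n\phi)}+\frac{k_2}{\sin^2(k_n\phi)}\Big)$$ are three independent constants of motion of $H_{na}$, i.e. $\{J_{aj},H_{na}\}=0$ for $j=1,2,3$; hence $H_{na}$ is superintegrable.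
   Context: The Poisson bracket is the canonical one in $(r,\phi,p_r,p_\phi)$. A constant of motion of $H$ is a function $F$ with $\{F,H\}=0$. Superintegrable: admits, besides $H$, two further functionally independent constants of motion. *)

From Stdlib Require Import Reals.
From Coquelicot Require Import Coquelicot.
Open Scope R_scope.

Definition phasefun := R -> R -> R -> R -> R.

Definition d_r    (F : phasefun) r f pr pf := Derive (fun x => F x f pr pf) r.
Definition d_phi  (F : phasefun) r f pr pf := Derive (fun x => F r x pr pf) f.
Definition d_pr   (F : phasefun) r f pr pf := Derive (fun x => F r f x pf) pr.
Definition d_pphi (F : phasefun) r f pr pf := Derive (fun x => F r f pr x) pf.

Definition poisson (F G : phasefun) r f pr pf :=
  d_r F r f pr pf * d_pr G r f pr pf - d_pr F r f pr pf * d_r G r f pr pf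
  + d_phi F r f pr pf * d_pphi G r f pr pf - d_pphi F r f pr pf * d_phi G r f pr pf.

Definition kn (n : R) := n - 1.
Definition domain (n : R) r f (pr pf : R) : Prop :=
  0 < r /\ cos (kn n * f) * sin (kn n * f) <> 0.

Definition constant_of_motion (n : R) (H F : phasefun) : Prop :=
  forall r f pr pf, domain n r f pr pf -> poisson F H r f pr pf = 0.

Definition grad_indep3 (F1 F2 F3 : phasefun) r f pr pf : Prop :=
  forall a b c : R,
    a * d_r F1 r f pr pf + b * d_r F2 r f pr pf + c * d_r F3 r f pr pf = 0 ->
    a * d_phi F1 r f pr pf + b * d_phi F2 r f pr pf + c * d_phi F3 r f pr pf = 0 ->
    a * d_pr F1 r f pr pf + b * d_pr F2 r f pr pf + c * d_pr F3 r f pr pf = 0 ->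
    a * d_pphi F1 r f pr pf + b * d_pphi F2 r f pr pf + c * d_pphi F3 r f pr pf = 0 ->
    a = 0 /\ b = 0 /\ c = 0.

(* Functional independence: the Jacobian of (F1,F2,F3) has full rank 3 on a
   dense subset of the domain (that subset is automatically open). *)
Definition functionally_independent3 (n : R) (F1 F2 F3 : phasefun) : Prop :=
  forall r f pr pf, domain n r f pr pf -> forall eps : R, 0 < eps ->
    exists r' f' pr' pf',
      domain n r' f' pr' pf' /\
      Rabs (r' - r) < eps /\ Rabs (f' - f) < eps /\
      Rabs (pr' - pr) < eps /\ Rabs (pf' - pf) < eps /\
      grad_indep3 F1 F2 F3 r' f' pr' pf'.

Definition superintegrable (n : R) (H : phasefun) : Prop :=
  exists F1 F2 : phasefun,
    constant_of_motion n H F1 /\ constant_of_motion n H F2 /\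
    functionally_independent3 n H F1 F2.

Definition Hna (n k0 k1 k2 : R) : phasefun := fun r f pr pf =>
  / 2 * Rpower r (2 * n) * (pr ^ 2 + pf ^ 2 / r ^ 2)
  + k0 / Rpower r (2 * kn n)
  + Rpower r (2 * kn n) * (k1 / cos (kn n * f) ^ 2 + k2 / sin (kn n * f) ^ 2).

Definition P1 (n : R) : phasefun := fun r f pr pf =>
  Rpower r n * (pr * cos (kn n * f) + / r * pf * sin (kn n * f)).
Definition P2 (n : R) : phasefun := fun r f pr pf =>
  Rpower r n * (pr * sin (kn n * f) - / r * pf * cos (kn n * f)).

Definition Ja1 (n k0 k1 k2 : R) : phasefun := fun r f pr pf =>
  P1 n r f pr pf ^ 2 + 2 * k0 / Rpower r (2 * kn n) * cos (kn n * f) ^ 2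
  + 2 * k1 * Rpower r (2 * kn n) / cos (kn n * f) ^ 2.
Definition Ja2 (n k0 k1 k2 : R) : phasefun := fun r f pr pf =>
  P2 n r f pr pf ^ 2 + 2 * k0 / Rpower r (2 * kn n) * sin (kn n * f) ^ 2
  + 2 * k2 * Rpower r (2 * kn n) / sin (kn n * f) ^ 2.
Definition Ja3 (n k0 k1 k2 : R) : phasefun := fun r f pr pf =>
  pf ^ 2 + 2 * (k1 / cos (kn n * f) ^ 2 + k2 / sin (kn n * f) ^ 2).

(* The three brackets are computed explicitly; after the half-angle substitution for
   (cos (k_n phi), sin (k_n phi)) each of them is a rational identity.

   Independence uses only the rows d/dr, d/dp_r, d/dp_phi of the Jacobian.  J3 depends on
   (phi, p_phi) alone, so the 3x3 minor of (J1, J2, J3) on these rows is 2 p_phi times the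
   (r, p_r)-minor of (J1, J2).  That minor is a quadratic polynomial in p_r with leading
   coefficient 4 k_n r^(4n-2) p_phi cos (k_n phi) sin (k_n phi), nonzero for p_phi <> 0 since
   k_n <> 0, so it cannot vanish at three equally spaced points: arbitrarily close to any
   point the minor is nonzero.  Since H = (J1 + J2) / 2, the minor of (H, J1, J3) is minus
   half that of (J1, J2, J3), which gives superintegrability. *)

From Pilot Require Import Defs.
From Stdlib Require Import Reals Lra.
From Coquelicot Require Import Coquelicot.
Open Scope R_scope.

Lemma Rpower_pos r a : 0 < Rpower r a.
Proof. apply exp_pos. Qed.

Lemma Rpower_neq_0 r a : Rpower r a <> 0.
Proof. apply Rgt_not_eq, Rpower_pos. Qed.

Lemma is_derive_Rpower r a : 0 < r ->
  is_derive (fun x => Rpower x a) r (a * Rpower r a / r).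
Proof.
  intros hr; apply is_derive_Reals.
  replace (a * Rpower r a / r) with (a * Rpower r (a - 1)).
  - now apply derivable_pt_lim_power.
  - unfold Rminus; rewrite Rpower_plus, Rpower_Ropp, Rpower_1 by lra.
    field; lra.
Qed.

Lemma ex_derive_Rpower r a : 0 < r -> ex_derive (fun x => Rpower x a) r.
Proof. intros hr; eexists; now apply is_derive_Rpower. Qed.

Lemma Derive_Rpower r a : 0 < r ->
  Derive (fun x => Rpower x a) r = a * Rpower r a / r.
Proof. intros hr; now apply is_derive_unique, is_derive_Rpower. Qed.

Lemma Rpower_double r a : Rpower r (2 * a) = Rpower r a ^ 2.
Proof. replace (2 * a) with (a + a) by ring; rewrite Rpower_plus; ring. Qed.

Lemma Rpower_double_kn r n : 0 < r -> Rpower r (2 * kn n) = Rpower r n ^ 2 / r ^ 2.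
Proof.
  intros hr; unfold kn.
  replace (2 * (n - 1)) with (2 * n + - INR 2) by (simpl; ring).
  rewrite Rpower_plus, Rpower_Ropp, Rpower_pow, Rpower_double by exact hr.
  reflexivity.
Qed.

Lemma unit_circle_half_tangent c s : c ^ 2 + s ^ 2 = 1 -> c <> 0 -> s <> 0 ->
  exists t, t <> 0 /\ 1 - t ^ 2 <> 0 /\ 1 + t ^ 2 <> 0 /\
    c = (1 - t ^ 2) / (1 + t ^ 2) /\ s = 2 * t / (1 + t ^ 2).
Proof.
  intros hcs hc hs.
  assert (h1c : 1 + c <> 0) by (intro h; apply hs; nra).
  assert (hdiv : forall a, a <> 0 -> a / (1 + c) <> 0).
  { intros a ha; unfold Rdiv; apply Rmult_integral_contrapositive_currified; auto.
    now apply Rinv_neq_0_compat. }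
  exists (s / (1 + c)).
  replace ((s / (1 + c)) ^ 2) with ((1 - c) / (1 + c)).
  2: { unfold Rdiv; rewrite Rpow_mult_distr, pow_inv.
       replace (s ^ 2) with ((1 - c) * (1 + c)) by nra. field; auto. }
  replace (1 + (1 - c) / (1 + c)) with (2 / (1 + c)) by (field; auto).
  replace (1 - (1 - c) / (1 + c)) with (2 * c / (1 + c)) by (field; auto).
  repeat split; try apply hdiv; try lra; try (field; auto).
Qed.

Ltac derive_side_condition :=
  first [ now apply ex_derive_Rpower | apply Rpower_neq_0 | assumption | lra
        | repeat apply Rmult_integral_contrapositive_currified; (assumption || lra) ].

(* [auto_derive] treats [Rpower] as opaque and leaves [Derive (fun x => Rpower x a) r]
   behind; it must be rewritten away before the next round, which would match it again. *)
Ltac compute_partials :=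
  unfold d_r, d_phi, d_pr, d_pphi;
  repeat (erewrite is_derive_unique;
          [ | auto_derive; [ .. | reflexivity ]; repeat split; derive_side_condition ];
          rewrite ?Derive_Rpower by assumption).

(* After the half-angle substitution [cos^2 + sin^2 = 1] holds identically, so the
   remaining trigonometric identity is a rational one that [field] decides. *)
Ltac trig_field r n f :=
  rewrite ?Rpower_double_kn, ?Rpower_double by assumption;
  generalize (Rpower_pos r n); set (x := Rpower r n); clearbody x; intros hx;
  generalize (sin2_cos2 (kn n * f)); unfold Rsqr;
  set (c := cos (kn n * f)) in *; set (s := sin (kn n * f)) in *; clearbody c s;
  intros hpyth;
  destruct (unit_circle_half_tangent c s) as (t & ht & htc & hts & -> & ->);
  [ lra | assumption | assumption | ];
  unfold kn; field; repeat split; auto; lra.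

Definition det3 a1 a2 a3 b1 b2 b3 c1 c2 c3 : R :=
  a1 * (b2 * c3 - b3 * c2) - a2 * (b1 * c3 - b3 * c1) + a3 * (b1 * c2 - b2 * c1).

Lemma det3_neq0_kernel_trivial a1 a2 a3 b1 b2 b3 c1 c2 c3 x y z :
  det3 a1 a2 a3 b1 b2 b3 c1 c2 c3 <> 0 ->
  x * a1 + y * a2 + z * a3 = 0 ->
  x * b1 + y * b2 + z * b3 = 0 ->
  x * c1 + y * c2 + z * c3 = 0 ->
  x = 0 /\ y = 0 /\ z = 0.
Proof.
  intros hdet ea eb ec.
  set (D := det3 a1 a2 a3 b1 b2 b3 c1 c2 c3) in hdet.
  assert (cancel : forall u, u * D = 0 -> u = 0).
  { intros u hu; destruct (Rmult_integral _ _ hu); [ assumption | contradiction ]. }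
  (* Cramer's rule: expand along the column of the unknown. *)
  split; [ | split ]; apply cancel.
  - replace (x * D) with ((b2 * c3 - b3 * c2) * (x * a1 + y * a2 + z * a3)
      - (a2 * c3 - a3 * c2) * (x * b1 + y * b2 + z * b3)
      + (a2 * b3 - a3 * b2) * (x * c1 + y * c2 + z * c3)) by (unfold D, det3; ring).
    rewrite ea, eb, ec; ring.
  - replace (y * D) with (- (b1 * c3 - b3 * c1) * (x * a1 + y * a2 + z * a3)
      + (a1 * c3 - a3 * c1) * (x * b1 + y * b2 + z * b3)
      - (a1 * b3 - a3 * b1) * (x * c1 + y * c2 + z * c3)) by (unfold D, det3; ring).
    rewrite ea, eb, ec; ring.
  - replace (z * D) with ((b1 * c2 - b2 * c1) * (x * a1 + y * a2 + z * a3)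
      - (a1 * c2 - a2 * c1) * (x * b1 + y * b2 + z * b3)
      + (a1 * b2 - a2 * b1) * (x * c1 + y * c2 + z * c3)) by (unfold D, det3; ring).
    rewrite ea, eb, ec; ring.
Qed.

Definition minor3 (F1 F2 F3 : phasefun) r f pr pf :=
  det3 (d_r F1 r f pr pf) (d_r F2 r f pr pf) (d_r F3 r f pr pf)
       (d_pr F1 r f pr pf) (d_pr F2 r f pr pf) (d_pr F3 r f pr pf)
       (d_pphi F1 r f pr pf) (d_pphi F2 r f pr pf) (d_pphi F3 r f pr pf).

Lemma grad_indep3_of_minor3 F1 F2 F3 r f pr pf :
  minor3 F1 F2 F3 r f pr pf <> 0 -> grad_indep3 F1 F2 F3 r f pr pf.
Proof.
  intros h a b c er _ epr epf.
  exact (det3_neq0_kernel_trivial _ _ _ _ _ _ _ _ _ _ _ _ h er epr epf).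
Qed.

Lemma functionally_independent3_of_minor3 n F1 F2 F3 :
  (forall r f pr pf, Defs.domain n r f pr pf -> forall eps, 0 < eps ->
     exists pr' pf', Rabs (pr' - pr) < eps /\ Rabs (pf' - pf) < eps /\
       minor3 F1 F2 F3 r f pr' pf' <> 0) ->
  functionally_independent3 n F1 F2 F3.
Proof.
  intros hnear r f pr pf hd eps heps.
  destruct (hnear r f pr pf hd eps heps) as (pr' & pf' & hpr & hpf & hminor).
  destruct hd as [hr hcs].
  exists r, f, pr', pf'; rewrite !Rminus_eq_0, !Rabs_R0.
  split; [ split; assumption | ].
  do 4 (split; [ lra | ]).
  now apply grad_indep3_of_minor3.
Qed.

Definition minor_r_pr (F G : phasefun) r f pr pf :=
  d_r F r f pr pf * d_pr G r f pr pf - d_r G r f pr pf * d_pr F r f pr pf.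

Section Hamiltonian.
Variables n k0 k1 k2 r f : R.
Hypothesis hr : 0 < r.
Hypothesis hcs : cos (kn n * f) * sin (kn n * f) <> 0.

Local Notation H := (Hna n k0 k1 k2).
Local Notation J1 := (Ja1 n k0 k1 k2).
Local Notation J2 := (Ja2 n k0 k1 k2).
Local Notation J3 := (Ja3 n k0 k1 k2).

Let hc : cos (kn n * f) <> 0 := proj1 (Rmult_neq_0_reg _ _ hcs).
Let hs : sin (kn n * f) <> 0 := proj2 (Rmult_neq_0_reg _ _ hcs).

Lemma poisson_Ja1_Hna pr pf : poisson J1 H r f pr pf = 0.
Proof. unfold poisson, Ja1, P1, Hna; compute_partials; trig_field r n f. Qed.

Lemma poisson_Ja2_Hna pr pf : poisson J2 H r f pr pf = 0.
Proof. unfold poisson, Ja2, P2, Hna; compute_partials; trig_field r n f. Qed.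

Lemma poisson_Ja3_Hna pr pf : poisson J3 H r f pr pf = 0.
Proof. unfold poisson, Ja3, Hna; compute_partials; trig_field r n f. Qed.

Lemma partials_Ja3 pr pf :
  d_r J3 r f pr pf = 0 /\ d_pr J3 r f pr pf = 0 /\ d_pphi J3 r f pr pf = 2 * pf.
Proof. unfold Ja3; compute_partials; repeat split; ring. Qed.

Lemma partials_Hna_eq_half_Ja1_add_Ja2 pr pf :
  d_r H r f pr pf = (d_r J1 r f pr pf + d_r J2 r f pr pf) / 2 /\
  d_pr H r f pr pf = (d_pr J1 r f pr pf + d_pr J2 r f pr pf) / 2 /\
  d_pphi H r f pr pf = (d_pphi J1 r f pr pf + d_pphi J2 r f pr pf) / 2.
Proof.
  unfold Hna, Ja1, Ja2, P1, P2; compute_partials.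
  repeat split; trig_field r n f.
Qed.

Lemma minor3_Ja pr pf : minor3 J1 J2 J3 r f pr pf = 2 * pf * minor_r_pr J1 J2 r f pr pf.
Proof.
  unfold minor3, minor_r_pr, det3.
  destruct (partials_Ja3 pr pf) as (-> & -> & ->); ring.
Qed.

Lemma minor3_Hna_Ja1_Ja3 pr pf : minor3 H J1 J3 r f pr pf = - minor3 J1 J2 J3 r f pr pf / 2.
Proof.
  unfold minor3, det3.
  destruct (partials_Hna_eq_half_Ja1_add_Ja2 pr pf) as (-> & -> & ->); field.
Qed.

Lemma minor_r_pr_Ja_second_difference pr pf d :
  minor_r_pr J1 J2 r f (pr + 2 * d) pf - 2 * minor_r_pr J1 J2 r f (pr + d) pf
  + minor_r_pr J1 J2 r f pr pf
  = 8 * kn n * Rpower r n ^ 4 * pf * cos (kn n * f) * sin (kn n * f) / r ^ 2 * d ^ 2.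
Proof.
  unfold minor_r_pr, Ja1, Ja2, P1, P2.
  compute_partials; trig_field r n f.
Qed.

End Hamiltonian.

Lemma exists_nonzero_near p eps : 0 < eps -> exists p', Rabs (p' - p) < eps /\ p' <> 0.
Proof.
  intros heps; destruct (Req_dec p 0) as [-> | hp].
  - exists (eps / 2); rewrite Rminus_0_r, Rabs_pos_eq by lra; split; lra.
  - exists p; rewrite Rminus_eq_0, Rabs_R0; auto.
Qed.

Lemma exists_nonzero_near_of_second_difference (g : R -> R) p eps : 0 < eps ->
  g (p + 2 * (eps / 3)) - 2 * g (p + eps / 3) + g p <> 0 ->
  exists p', Rabs (p' - p) < eps /\ g p' <> 0.
Proof.
  intros heps hdiff.
  destruct (Req_dec (g p) 0) as [h0 | h0].
  2: { exists p; rewrite Rminus_eq_0, Rabs_R0; auto. }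
  destruct (Req_dec (g (p + eps / 3)) 0) as [h1 | h1].
  - exists (p + 2 * (eps / 3)).
    replace (p + 2 * (eps / 3) - p) with (2 * (eps / 3)) by ring.
    rewrite Rabs_pos_eq by lra; split; [ lra | ].
    intro h2; apply hdiff; rewrite h0, h1, h2; ring.
  - exists (p + eps / 3).
    replace (p + eps / 3 - p) with (eps / 3) by ring.
    rewrite Rabs_pos_eq by lra; split; [ lra | exact h1 ].
Qed.

Lemma minor3_Ja_nonzero_near n k0 k1 k2 r f pr pf eps :
  n <> 1 -> Defs.domain n r f pr pf -> 0 < eps ->
  exists pr' pf', Rabs (pr' - pr) < eps /\ Rabs (pf' - pf) < eps /\
    minor3 (Ja1 n k0 k1 k2) (Ja2 n k0 k1 k2) (Ja3 n k0 k1 k2) r f pr' pf' <> 0.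
Proof.
  intros hn [hr hcs] heps.
  destruct (exists_nonzero_near pf eps heps) as (pf' & hpf & hpf0).
  destruct (exists_nonzero_near_of_second_difference
              (fun p => minor_r_pr (Ja1 n k0 k1 k2) (Ja2 n k0 k1 k2) r f p pf') pr eps heps)
    as (pr' & hpr & hminor).
  { rewrite minor_r_pr_Ja_second_difference by assumption.
    destruct (Rmult_neq_0_reg _ _ hcs) as [hc hs].
    assert (hkn : kn n <> 0) by (unfold kn; lra).
    unfold Rdiv; repeat apply Rmult_integral_contrapositive_currified;
      try apply Rinv_neq_0_compat; try apply pow_nonzero;
      try apply Rpower_neq_0; (assumption || lra). }
  exists pr', pf'; split; [ assumption | split; [ assumption | ] ].
  rewrite minor3_Ja by assumption.
  apply Rmult_integral_contrapositive_currified; [ lra | exact hminor ].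
Qed.

Theorem mainTheorem2 (n k0 k1 k2 : R) (hn : n <> 1) :
  constant_of_motion n (Hna n k0 k1 k2) (Ja1 n k0 k1 k2) /\
  constant_of_motion n (Hna n k0 k1 k2) (Ja2 n k0 k1 k2) /\
  constant_of_motion n (Hna n k0 k1 k2) (Ja3 n k0 k1 k2) /\
  functionally_independent3 n (Ja1 n k0 k1 k2) (Ja2 n k0 k1 k2) (Ja3 n k0 k1 k2) /\
  superintegrable n (Hna n k0 k1 k2).
Proof.
  assert (hJ1 : constant_of_motion n (Hna n k0 k1 k2) (Ja1 n k0 k1 k2))
    by (intros r f pr pf [hr hcs]; now apply poisson_Ja1_Hna).
  assert (hJ2 : constant_of_motion n (Hna n k0 k1 k2) (Ja2 n k0 k1 k2))
    by (intros r f pr pf [hr hcs]; now apply poisson_Ja2_Hna).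
  assert (hJ3 : constant_of_motion n (Hna n k0 k1 k2) (Ja3 n k0 k1 k2))
    by (intros r f pr pf [hr hcs]; now apply poisson_Ja3_Hna).
  assert (hindep : functionally_independent3 n (Ja1 n k0 k1 k2) (Ja2 n k0 k1 k2) (Ja3 n k0 k1 k2)).
  { apply functionally_independent3_of_minor3; intros.
    now apply minor3_Ja_nonzero_near. }
  refine (conj hJ1 (conj hJ2 (conj hJ3 (conj hindep _)))).
  exists (Ja1 n k0 k1 k2), (Ja3 n k0 k1 k2); split; [ exact hJ1 | split; [ exact hJ3 | ] ].
  apply functionally_independent3_of_minor3; intros r f pr pf hd eps heps.
  destruct (minor3_Ja_nonzero_near n k0 k1 k2 r f pr pf eps hn hd heps)
    as (pr' & pf' & hpr & hpf & hminor).
  exists pr', pf'; split; [ assumption | split; [ assumption | ] ].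
  destruct hd as [hr hcs]; rewrite minor3_Hna_Ja1_Ja3 by assumption.
  intro h; apply hminor; lra.
Qed.
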